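(* Let $\gamma:S^1\to\mathbb{R}^{2d}$ be a closed symplectically convex curve parametrized so that $\omega(\gamma'(t),\gamma''(t))=1$, and let $\Sigma=\{P:\exists t\in S^1,\ \omega(P-\gamma(t),\gamma'(t))=0,\ \omega(P-\gamma(t),\gamma''(t))=0\}$ be the wall. Then in a sufficiently small neighborhood of $\gamma$ the local multiplicity is either $0$ or $2$: every point $P\notin\Sigma$ sufficiently close to $\gamma$ either cannot be written as $P=\gamma(t)+v$ with $\omega(\gamma'(t),v)=0$, or can be written in this way in precisely two different ways, where in both cases one only considers representations with $\gamma(t)$ close to $P$ and $v$ small.
   Context: $\mathbb{R}^{2d}$ carries its standard symplectic form $\omega$; $\gamma$ is symplectically convex if $\omega(\gamma'(t),\gamma''(t))>0$ for all $t$. The multiplicity at a regular value $P$ of $\Psi(v,t)=\gamma(t)+v$ (defined on $\{(v,t):\omega(v,\gamma'(t))=0\}$) is the number of its preimages, i.e. of representations $P=\gamma(t)+v$ with $\omega(\gamma'(t),v)=0$; $\Sigma$ is the set of singular values of $\Psi$. *)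

From HB Require Import structures.
From mathcomp Require Import all_boot all_order all_algebra.
From mathcomp Require Import all_classical all_reals all_analysis.
Set Implicit Arguments. Unset Strict Implicit. Unset Printing Implicit Defensive.
Import Order.TTheory GRing.Theory Num.Theory.
Import numFieldNormedType.Exports.
Local Open Scope ring_scope.

(* R^{2d} is modelled as row vectors of length d + d: coordinates
   (q_1..q_d, p_1..p_d).  Standard symplectic form
   omega(x,y) = sum_i (q_i(x) p_i(y) - p_i(x) q_i(y)). *)
Definition omega {R : realType} {d : nat} (x y : 'rV[R]_(d + d)) : R :=
  \sum_(i < d) (x ord0 (lshift d i) * y ord0 (rshift d i)
                - x ord0 (rshift d i) * y ord0 (lshift d i)).

Definition smooth_curve {R : realType} {n : nat} (g : R -> 'rV[R]_n) : Prop :=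
  forall (k : nat) (t : R), derivable (derive1n k g) t 1.

(* closed curve: g : R -> R^n periodic of period L > 0, i.e. a map S^1 = R/LZ -> R^n *)
Definition closed_curve {R : realType} {n : nat} (g : R -> 'rV[R]_n) (L : R) : Prop :=
  0 < L /\ forall t, g (t + L) = g t.

Definition wall {R : realType} {d : nat} (g : R -> 'rV[R]_(d + d)) (P : 'rV[R]_(d + d))
  : Prop :=
  exists t : R, omega (P - g t) (derive1 g t) = 0 /\ omega (P - g t) (derive1n 2 g t) = 0.

(* parameters t with P = g t + v, omega (g' t) v = 0 (v := P - g t) *)
Definition representation {R : realType} {d : nat} (g : R -> 'rV[R]_(d + d))
  (P : 'rV[R]_(d + d)) (t : R) : Prop :=
  omega (derive1 g t) (P - g t) = 0.

Definition card0or2 {T : Type} (A : T -> Prop) : Prop :=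
  (forall t, ~ A t) \/
  (exists t1 t2, t1 <> t2 /\ A t1 /\ A t2 /\ forall t, A t -> t = t1 \/ t = t2).

From HB Require Import structures.
From mathcomp Require Import all_boot all_order all_algebra.
From mathcomp Require Import all_classical all_reals all_analysis.
From mathcomp Require Import ring lra.
Set Implicit Arguments. Unset Strict Implicit. Unset Printing Implicit Defensive.
Import Order.TTheory GRing.Theory Num.Theory.
Import numFieldNormedType.Exports.
Local Open Scope ring_scope.

(* For P near gamma(t0) put phi(t) = omega(gamma'(t), P - gamma(t)), whose
   zeros are the representations of P.  Then phi'(t) = omega(gamma''(t), P - gamma(t))
   and phi''(t) = 1 + omega(gamma'''(t), P - gamma(t)), so near t0 the function phi
   is uniformly convex while phi(t0) and phi'(t0) are small; by Taylor's bound phi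
   is positive at distance about delta from t0.  A strictly convex function that
   is positive near both ends of an interval has zero or two zeros there, unless
   one of them is double, i.e. phi(t) = phi'(t) = 0, which says that P lies on
   the wall.  Periodicity bounds the derivatives of gamma, which makes delta and
   eps independent of t0. *)

Section RealCalculus.
Variable R : realType.
Implicit Types (f df : R -> R) (a b k x t : R).

Lemma continuous_is_derive f df :
  (forall x, is_derive x 1 f (df x)) -> continuous f.
Proof.
move=> Df x; apply/differentiable_continuous/derivable1_diffP.
by have [] := Df x.
Qed.

Definition between a b x := (a <= x <= b) \/ (b <= x <= a).

Lemma between_dist a b x : between a b x -> `|x - a| <= `|b - a|.
Proof. by case=> /andP[? ?]; [rewrite !ger0_norm | rewrite !ler0_norm]; lra. Qed.

Lemma between_mul_ge0 a b x : between a b x -> 0 <= (x - a) * (b - a).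
Proof. by case=> /andP[? ?]; [apply: mulr_ge0 | apply: mulr_le0]; lra. Qed.

Lemma mean_value f df a b : (forall x, is_derive x 1 f (df x)) ->
  exists2 c, between a b c & f b - f a = df c * (b - a).
Proof.
move=> Df; have cf := continuous_subspaceT (continuous_is_derive Df).
have [ab|ba] := lerP a b.
  have [c c_ab ->] := MVT_segment ab (fun x _ => Df x) (cf _).
  by exists c => //; left; move: c_ab; rewrite in_itv.
have [c c_ba e] := MVT_segment (ltW ba) (fun x _ => Df x) (cf _).
exists c; first by right; move: c_ba; rewrite in_itv.
by rewrite -opprB e -mulrN opprB.
Qed.

Lemma rolle f df a b : (forall x, is_derive x 1 f (df x)) ->
  a < b -> f a = f b -> exists2 c, a <= c <= b & df c = 0.
Proof.
move=> Df ab fab; have [c c_ab] := mean_value a b Df.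
rewrite fab subrr => /esym/eqP; rewrite mulf_eq0 subr_eq0 => /orP[/eqP dc0|/eqP ba].
  by exists c => //; case: c_ab => /andP[? ?]; apply/andP; split; lra.
by move: ab; rewrite ba ltxx.
Qed.

Lemma taylor_lower_bound (f f1 f2 : R -> R) k x t :
  (forall y : R, is_derive y 1 f (f1 y)) -> (forall y : R, is_derive y 1 f1 (f2 y)) ->
  (forall u, `|u - x| <= `|t - x| -> k <= f2 u) ->
  f x + f1 x * (t - x) + k / 2 * (t - x) ^+ 2 <= f t.
Proof.
move=> Df Df1 f2_ge.
pose h u := f u - f1 x * (u - x) - k / 2 * (u - x) ^+ 2.
pose h1 u := f1 u - f1 x - k * (u - x).
have Dh (y : R) : is_derive y 1 h (h1 y).
  by apply: is_derive_eq; rewrite /h1 subr0 /GRing.scale /=; lra.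
have Dh1 (y : R) : is_derive y 1 h1 (f2 y - k).
  by apply: is_derive_eq; rewrite subr0 /GRing.scale /=; lra.
have [c xtc ht] := mean_value x t Dh.
have [e xce h1c] := mean_value x c Dh1.
have e_near : `|e - x| <= `|t - x|.
  exact: le_trans (between_dist xce) (between_dist xtc).
have : 0 <= h t - h x.
  rewrite ht.
  have -> : h1 c = (f2 e - k) * (c - x) by rewrite -h1c /h1; lra.
  rewrite -mulrA; apply: mulr_ge0.
    by rewrite subr_ge0; apply: f2_ge.
  exact: between_mul_ge0.
by rewrite /h; lra.
Qed.

End RealCalculus.

Section ConvexRoots.
Variables (R : realType) (f f1 f2 : R -> R) (a b : R).
Hypothesis Df : forall x : R, is_derive x 1 f (f1 x).
Hypothesis Df1 : forall x : R, is_derive x 1 f1 (f2 x).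
Hypothesis f2_gt0 : forall x, a < x < b -> 0 < f2 x.
Hypothesis simple_roots : forall x, f x = 0 -> f1 x <> 0.

Lemma no_three_roots x y z : a < x -> x < y -> y < z -> z < b ->
  f x = 0 -> f y = 0 -> f z = 0 -> False.
Proof.
move=> ax xy yz zb fx fy fz.
have [u /andP[xu uy] f1u] := rolle Df xy (etrans fx (esym fy)).
have [v /andP[yv vz] f1v] := rolle Df yz (etrans fy (esym fz)).
have [uv|vu] := ltrP u v.
  have [w /andP[uw wv] f2w] := rolle Df1 uv (etrans f1u (esym f1v)).
  have : 0 < f2 w by apply: f2_gt0; apply/andP; split; lra.
  by rewrite f2w ltxx.
have uy' : u = y by apply/eqP; rewrite eq_le uy /=; lra.
by apply: (simple_roots fy); rewrite -uy'.
Qed.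

Lemma two_roots_between a' b' s : a' < s < b' -> 0 < f a' -> 0 < f b' -> f s = 0 ->
  exists c1 c2, [/\ a' <= c1 < c2, c2 <= b', f c1 = 0 & f c2 = 0].
Proof.
move=> /andP[a's sb'] fa' fb' fs.
have cf := continuous_subspaceT (continuous_is_derive Df).
have a'b' : a' <= b' by lra.
have [m m_in m_min] := EVT_min a'b' (cf _).
move: (m_in); rewrite in_itv /= => /andP[a'm mb'].
have fm_le0 : f m <= 0 by rewrite -fs; apply: m_min; rewrite in_itv /=; lra.
have fm_lt0 : f m < 0.
  rewrite lt_neqAle fm_le0 andbT; apply/eqP => fm0.
  have a'_neq_m : a' != m by apply/eqP => e; move: fa'; rewrite e fm0 ltxx.
  have m_neq_b' : m != b' by apply/eqP => e; move: fb'; rewrite -e fm0 ltxx.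
  have m_inner : m \in `]a', b'[.
    by rewrite in_itv /= !lt_neqAle a'_neq_m m_neq_b' a'm mb'.
  have f_derivable x : derivable f x 1 by case: (Df x).
  have Dfm0 := derive1_at_min a'b' (fun x _ => f_derivable x) m_inner
    (fun x x_in => m_min x (subset_itv_oo_cc x_in)).
  by apply: (simple_roots fm0); case: (Df m) => _ <-; case: Dfm0.
have [c1 c1_in fc1] : exists2 c, c \in `[a', m] & f c = 0.
  apply: IVT; [by [] | exact: cf |].
  by rewrite ge_min le_max; apply/andP; split; apply/orP; [right | left]; lra.
have [c2 c2_in fc2] : exists2 c, c \in `[m, b'] & f c = 0.
  apply: IVT; [by [] | exact: cf |].
  by rewrite ge_min le_max; apply/andP; split; apply/orP; [left | right]; lra.
move: c1_in c2_in; rewrite !in_itv /= => /andP[a'c1 c1m] /andP[mc2 c2b'].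
exists c1, c2; split => //; apply/andP; split => //.
have c1_neq_m : c1 != m by apply/eqP => e; move: fm_lt0; rewrite -e fc1 ltxx.
by apply: lt_le_trans mc2; rewrite lt_neqAle c1_neq_m c1m.
Qed.

Lemma card0or2_roots_convex a' b' : a < a' -> b' < b ->
  (forall x, a < x <= a' -> 0 < f x) -> (forall x, b' <= x < b -> 0 < f x) ->
  card0or2 (fun x => a < x < b /\ f x = 0).
Proof.
move=> aa' b'b f_gt0_left f_gt0_right.
have root_inner x : a < x < b -> f x = 0 -> a' < x < b'.
  move=> /andP[ax xb] fx; apply/andP; split; rewrite ltNge; apply/negP => x_out;
    suff : 0 < f x by rewrite fx ltxx.
    by apply: f_gt0_left; rewrite ax x_out.
  by apply: f_gt0_right; rewrite xb x_out.
have [[s [s_in fs]]|no_root] := pselect (exists s, a < s < b /\ f s = 0); last first.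
  by left => x root_x; apply: no_root; exists x.
have fa' : 0 < f a' by apply: f_gt0_left; rewrite aa' lexx.
have fb' : 0 < f b' by apply: f_gt0_right; rewrite b'b lexx.
have [c1 [c2 [/andP[a'c1 c12] c2b' fc1 fc2]]] :=
  two_roots_between (root_inner s s_in fs) fa' fb' fs.
right; exists c1, c2; split; first by apply/eqP; rewrite lt_eqF.
have ac1 : a < c1 by lra.
have c2b : c2 < b by lra.
split; first by split => //; apply/andP; split; lra.
split; first by split => //; apply/andP; split; lra.
move=> x [/andP[ax xb] fx].
have [xc1|c1x|->] := ltgtP x c1; [exfalso | | by left].
  exact: (no_three_roots ax xc1 c12 c2b fx fc1 fc2).
have [xc2|c2x|->] := ltgtP x c2; [exfalso | exfalso | by right].
  exact: (no_three_roots ac1 c1x xc2 c2b fc1 fx fc2).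
exact: (no_three_roots ac1 c12 c2x xb fc1 fc2 fx).
Qed.

End ConvexRoots.

Section MatrixEntries.
Variables (R : realType) (m n : nat).

Lemma norm_mx_entry_le (A : 'M[R]_(m, n)) i j : `|A i j| <= `|A|.
Proof.
rewrite [leRHS]/Num.Def.normr /= mx_normrE.
exact: (le_bigmax _ _ (i, j)).
Qed.

Lemma is_derive_mx_entry (A : R -> 'M[R]_(m, n)) (dA : 'M[R]_(m, n)) (t : R) i j :
  is_derive t 1 A dA -> is_derive t 1 (fun s => A s i j) (dA i j).
Proof.
move=> DA; have A_derivable : derivable A t 1 by case: DA.
apply: (is_derive_eq (derivableP ((derivable_mxP A t 1).1 A_derivable i j))).
by case: DA => _ <-; rewrite derive_mx // mxE.
Qed.

End MatrixEntries.

Section SymplecticForm.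
Variables (R : realType) (d : nat).
Implicit Types x y z : 'rV[R]_(d + d).

Lemma omega_antisym x y : omega x y = - omega y x.
Proof. by rewrite /omega -sumrN; apply: eq_bigr => i _; ring. Qed.

Lemma omegaxx x : omega x x = 0.
Proof. by rewrite /omega big1 // => i _; ring. Qed.

Lemma omega0l y : omega 0 y = 0.
Proof. by rewrite /omega big1 // => i _; rewrite !mxE; ring. Qed.

Lemma omegaDr x y z : omega x (y + z) = omega x y + omega x z.
Proof. by rewrite /omega -big_split /=; apply: eq_bigr => i _; rewrite !mxE; ring. Qed.

Lemma omegaNr x y : omega x (- y) = - omega x y.
Proof. by rewrite /omega -sumrN; apply: eq_bigr => i _; rewrite !mxE; ring. Qed.

Lemma omegaBr x y z : omega x (y - z) = omega x y - omega x z.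
Proof. by rewrite omegaDr omegaNr. Qed.

Lemma norm_omega_le x y : `|omega x y| <= (d + d)%:R * (`|x| * `|y|).
Proof.
rewrite /omega; apply: le_trans (ler_norm_sum _ _ _) _.
apply: le_trans (_ : \sum_(i < d) (`|x| * `|y| + `|x| * `|y|) <= _).
  apply: ler_sum => i _; apply: le_trans (ler_normB _ _) _.
  by rewrite !normrM; apply: lerD; apply: ler_pM => //; exact: norm_mx_entry_le.
by rewrite sumr_const card_ord -mulr_natl natrD; lra.
Qed.

Lemma is_derive_omega (a b : R -> 'rV[R]_(d + d)) (da db : 'rV[R]_(d + d)) (t : R) :
  is_derive t 1 a da -> is_derive t 1 b db ->
  is_derive t 1 (fun s => omega (a s) (b s)) (omega da (b t) + omega (a t) db).
Proof.
move=> Da Db.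
pose h i s := a s ord0 (lshift d i) * b s ord0 (rshift d i)
              - a s ord0 (rshift d i) * b s ord0 (lshift d i).
have -> : (fun s => omega (a s) (b s)) = \sum_(i < d) h i.
  by apply/funext => s; rewrite fct_sumE.
have Dae j : is_derive t 1 (fun s => a s ord0 j) (da ord0 j) := is_derive_mx_entry ord0 j Da.
have Dbe j : is_derive t 1 (fun s => b s ord0 j) (db ord0 j) := is_derive_mx_entry ord0 j Db.
apply: is_derive_eq (is_derive_sum (fun i => is_deriveB (is_deriveM (Dae _) (Dbe _))
                                                     (is_deriveM (Dae _) (Dbe _)))) _.
rewrite /omega -big_split /=; apply: eq_bigr => i _.
by rewrite /GRing.scale /=; ring.
Qed.

End SymplecticForm.

Section PeriodicFunctions.
Variables (R : realType) (V : normedModType R).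
Implicit Types (h : R -> V) (L : R).

Lemma periodic_derive1 h L : periodic h L -> periodic (derive1 h) L.
Proof.
move=> hL t; rewrite /derive1.
suff -> : (fun x : R => x^-1 *: (h (x + (t + L)) - h (t + L))) =
          (fun x : R => x^-1 *: (h (x + t) - h t)) by [].
by apply/funext => x; rewrite addrA !hL.
Qed.

Lemma periodic_derive1n h L k : periodic h L -> periodic (derive1n k h) L.
Proof.
move=> hL; elim: k => [|k IHk]; first by rewrite derive1n0.
by rewrite derive1nS; exact: periodic_derive1.
Qed.

Lemma periodic_reduce h L : 0 < L -> periodic h L ->
  forall t, exists2 s, 0 <= s <= L & h t = h s.
Proof.
move=> L_gt0 hL t; have := floor_itv (t / L).
set z := Num.floor (t / L); rewrite intrD => /andP[zt tz].
have z_le : z%:~R * L <= t by rewrite -ler_pdivlMr.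
have z_gt : t < (z%:~R + 1) * L by rewrite -ltr_pdivrMr.
exists (t - z%:~R * L); first by apply/andP; split; lra.
clearbody z; case: z {zt tz z_le z_gt} => m.
  by rewrite -[in LHS](subrK (m%:~R * L) t) -pmulrn mulr_natl periodicn.
by rewrite NegzE mulrNz mulNr opprK -pmulrn mulr_natl periodicn.
Qed.

Lemma periodic_continuous_bounded h L : 0 < L -> periodic h L -> continuous h ->
  exists M, forall t, `|h t| <= M.
Proof.
move=> L_gt0 hL h_cont.
have norm_h_cont : continuous (fun t => `|h t|).
  by move=> x; apply: continuous_comp; [exact: h_cont | exact: norm_continuous].
have [c _ c_max] := EVT_max (ltW L_gt0) (continuous_subspaceT norm_h_cont).
exists `|h c| => t; have [s s_in ->] := periodic_reduce L_gt0 hL t.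
by apply: c_max; rewrite in_itv.
Qed.

End PeriodicFunctions.

Section SmoothCurves.
Variables (R : realType) (n : nat) (g : R -> 'rV[R]_n).
Hypothesis g_smooth : smooth_curve g.

Lemma is_derive_derive1n k (t : R) : is_derive t 1 (derive1n k g) (derive1n k.+1 g t).
Proof. by rewrite derive1nS derive1E; apply: derivableP; exact: g_smooth. Qed.

Lemma continuous_derive1n k : continuous (derive1n k g).
Proof.
by move=> t; apply/differentiable_continuous/derivable1_diffP; exact: g_smooth.
Qed.

Lemma derive1n_bounded L N : 0 < L -> periodic g L ->
  exists2 M, 1 <= M & forall k t, (k <= N)%N -> `|derive1n k g t| <= M.
Proof.
move=> L_gt0 g_periodic.
have bounded k : exists M, forall t, `|derive1n k g t| <= M.
  exact: periodic_continuous_bounded L_gt0 (periodic_derive1n k g_periodic)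
           (continuous_derive1n (k := k)).
elim: N => [|N [M M_ge1 M_bound]].
  have [M0 M0_bound] := bounded 0%N.
  exists (Num.max 1 M0) => [|k t]; first by rewrite le_max lexx.
  by rewrite leqn0 => /eqP ->; rewrite le_max M0_bound orbT.
have [MN MN_bound] := bounded N.+1.
exists (Num.max M MN) => [|k t]; first by rewrite le_max M_ge1.
rewrite leq_eqVlt ltnS => /orP[/eqP ->|kN]; first by rewrite le_max MN_bound orbT.
by rewrite le_max M_bound.
Qed.

End SmoothCurves.

Section LocalRepresentations.
Variables (R : realType) (d : nat) (gamma g1 g2 g3 : R -> 'rV[R]_(d + d)) (M : R).
Hypothesis Dgamma : forall t : R, is_derive t 1 gamma (g1 t).
Hypothesis Dg1 : forall t : R, is_derive t 1 g1 (g2 t).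
Hypothesis Dg2 : forall t : R, is_derive t 1 g2 (g3 t).
Hypothesis M_ge1 : 1 <= M.
Hypothesis g1_le : forall t, `|g1 t| <= M.
Hypothesis g2_le : forall t, `|g2 t| <= M.
Hypothesis g3_le : forall t, `|g3 t| <= M.
Hypothesis omega_g1_g2 : forall t, omega (g1 t) (g2 t) = 1.

Implicit Types x y w : 'rV[R]_(d + d).

Let K := (d + d)%:R * (M * M).

Lemma norm_omega_bounded_le x y : `|x| <= M -> `|y| <= M -> `|omega x y| <= K.
Proof.
by move=> xM yM; apply: le_trans (norm_omega_le x y) _; rewrite ler_wpM2l ?ler_pM.
Qed.

Lemma norm_omega_boundedl_le x y : `|x| <= M -> `|omega x y| <= K * `|y|.
Proof.
move=> xM; apply: le_trans (norm_omega_le x y) _.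
rewrite /K -mulrA ler_wpM2l // -mulrA ler_pM //.
by rewrite -[leLHS]mul1r ler_wpM2r.
Qed.

Lemma K_ge1 : 1 <= K.
Proof. by rewrite -(omega_g1_g2 0) (le_trans (ler_norm _)) ?norm_omega_bounded_le. Qed.

Lemma norm_omega_increment_le w s t : `|w| <= M ->
  `|omega w (gamma s - gamma t)| <= K * `|s - t|.
Proof.
move=> wM.
have Du (r : R) : is_derive r 1 (fun r => omega w (gamma r)) (omega w (g1 r)).
  apply: is_derive_eq (is_derive_omega (is_derive_cst w r 1) (Dgamma r)) _.
  by rewrite omega0l add0r.
have [c _ u_incr] := mean_value t s Du.
by rewrite omegaBr u_incr normrM ler_wpM2r ?norm_omega_bounded_le.
Qed.

(* [K * delta = 1/4] keeps [phi''] above [1/2] on the [delta]-ball around [t0], and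
   [K * eps = delta^2/64] makes [phi t0] and [phi' t0] so small that the Taylor bound
   forces [phi > 0] as soon as [|t - t0| >= delta/2]. *)
Let delta := (4 * K)^-1.
Let eps := delta ^+ 3 / 16.

Lemma delta_gt0 : 0 < delta.
Proof. by rewrite invr_gt0; have := K_ge1; lra. Qed.

Lemma K_delta : K * delta = 1 / 4.
Proof. by rewrite /delta; field; have := K_ge1; lra. Qed.

Lemma delta_le_quarter : delta <= 1 / 4.
Proof. by rewrite -K_delta ler_peMl ?K_ge1 // ltW // delta_gt0. Qed.

Lemma K_eps : K * eps = delta ^+ 2 / 64.
Proof. by rewrite /eps mulrA (exprS delta 2) mulrA K_delta; field. Qed.

Lemma delta_sqr_le : delta ^+ 2 <= 1 / 16.
Proof.
have := delta_le_quarter; have := delta_gt0; rewrite expr2 => ? ?.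
by apply: le_trans (_ : 1 / 4 * (1 / 4) <= _); [apply: ler_pM; lra | lra].
Qed.

Section NearPoint.
Variables (P : 'rV[R]_(d + d)) (t0 : R).
Hypothesis P_near : `|P - gamma t0| < eps.

Let phi t := omega (g1 t) (P - gamma t).
Let phi' t := omega (g2 t) (P - gamma t).
Let phi'' t := omega (g3 t) (P - gamma t) + 1.

Lemma is_derive_sub_curve (t : R) : is_derive t 1 (fun s => P - gamma s) (- g1 t).
Proof. by apply: is_derive_eq; rewrite sub0r. Qed.

Lemma is_derive_phi (t : R) : is_derive t 1 phi (phi' t).
Proof.
apply: is_derive_eq (is_derive_omega (Dg1 t) (is_derive_sub_curve t)) _.
by rewrite omegaNr omegaxx oppr0 addr0.
Qed.

Lemma is_derive_phi' (t : R) : is_derive t 1 phi' (phi'' t).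
Proof.
apply: is_derive_eq (is_derive_omega (Dg2 t) (is_derive_sub_curve t)) _.
by rewrite omegaNr (omega_antisym (g2 t)) omega_g1_g2 opprK.
Qed.

Lemma phi''_ge t : 1 - K * (`|P - gamma t0| + `|t - t0|) <= phi'' t.
Proof.
have -> : phi'' t = 1 + omega (g3 t) (P - gamma t0) + omega (g3 t) (gamma t0 - gamma t).
  by rewrite /phi'' -addrA -omegaDr addrA subrK addrC.
have := norm_omega_boundedl_le (P - gamma t0) (g3_le t).
have := norm_omega_increment_le t0 t (g3_le t).
rewrite distrC mulrDr; set u := omega _ _; set v := omega _ _.
by rewrite !ler_norml => /andP[? _] /andP[? _]; lra.
Qed.

Lemma phi''_ge_half t : `|t - t0| < delta -> 1 / 2 <= phi'' t.
Proof.
move=> t_near; apply: le_trans (phi''_ge t).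
have K_ge0 : 0 <= K by have := K_ge1; lra.
have : K * `|P - gamma t0| <= K * eps by apply: ler_wpM2l => //; exact: ltW.
have : K * `|t - t0| <= K * delta by apply: ler_wpM2l => //; exact: ltW.
by rewrite K_eps K_delta mulrDr; have := delta_sqr_le; lra.
Qed.

Lemma phi_gt0 t : delta / 2 <= `|t - t0| < delta -> 0 < phi t.
Proof.
move=> /andP[t_far t_near].
have := taylor_lower_bound (k := 1 / 2) (x := t0) (t := t) is_derive_phi is_derive_phi'
  (fun u u_near => phi''_ge_half (le_lt_trans u_near t_near)).
have phi_small (g : R -> 'rV[R]_(d + d)) : (forall s, `|g s| <= M) ->
    `|omega (g t0) (P - gamma t0)| <= delta ^+ 2 / 64.
  move=> g_le; rewrite -K_eps; apply: le_trans (norm_omega_boundedl_le _ (g_le t0)) _.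
  by apply: ler_wpM2l; [have := K_ge1; lra | exact: ltW].
have := phi_small _ g1_le; rewrite -/(phi t0) ler_norml => /andP[phi_t0 _].
have : `|phi' t0 * (t - t0)| <= delta ^+ 2 / 64 * 1.
  rewrite normrM; apply: ler_pM => //; first exact: phi_small.
  by have := delta_le_quarter; lra.
rewrite mulr1 ler_norml => /andP[phi'_t0 _].
have : (delta / 2) ^+ 2 <= (t - t0) ^+ 2.
  rewrite -(real_normK (num_real (t - t0))) !expr2.
  by apply: ler_pM => //; have := delta_gt0; lra.
have := delta_gt0; have : 0 < delta ^+ 2 by rewrite exprn_gt0 // delta_gt0.
rewrite expr_div_n; lra.
Qed.

End NearPoint.

Theorem card0or2_local_representations : exists delta eps : R, 0 < delta /\ 0 < eps /\
  forall t0 P, `|P - gamma t0| < eps ->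
    (forall t, omega (g1 t) (P - gamma t) = 0 -> omega (g2 t) (P - gamma t) <> 0) ->
    card0or2 (fun t => `|t - t0| < delta /\ omega (g1 t) (P - gamma t) = 0).
Proof.
have delta_gt0 := delta_gt0.
exists delta, eps; split=> //; split=> [|t0 P P_near simple_roots].
  by rewrite /eps divr_gt0 // exprn_gt0.
have -> : (fun t => `|t - t0| < delta /\ omega (g1 t) (P - gamma t) = 0) =
          (fun t => t0 - delta < t < t0 + delta /\ omega (g1 t) (P - gamma t) = 0).
  by apply/funext => t; rewrite ltr_distl.
apply: (card0or2_roots_convex (is_derive_phi P) (is_derive_phi' P) _ simple_roots
          (a' := t0 - delta / 2) (b' := t0 + delta / 2)); try lra.
- move=> x x_in; apply: lt_le_trans (phi''_ge_half P_near _); first lra.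
  by rewrite ltr_distl.
- move=> x /andP[? ?]; apply: phi_gt0 P_near _ _.
  by rewrite ler0_norm; [apply/andP; split | ]; lra.
- move=> x /andP[? ?]; apply: phi_gt0 P_near _ _.
  by rewrite ger0_norm; [apply/andP; split | ]; lra.
Qed.

End LocalRepresentations.

Theorem mainTheorem16 (R : realType) (d : nat) (gamma : R -> 'rV[R]_(d + d)) (L : R) :
  closed_curve gamma L ->
  smooth_curve gamma ->
  (forall t, omega (derive1 gamma t) (derive1n 2 gamma t) = 1) ->
  exists delta eps : R, 0 < delta /\ 0 < eps /\
    forall (t0 : R) (P : 'rV[R]_(d + d)),
      `|P - gamma t0| < eps ->
      ~ wall gamma P ->
      card0or2 (fun t : R => `|t - t0| < delta /\ representation gamma P t).
Proof.
move=> [L_gt0 gamma_periodic] gamma_smooth normalized.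
have [M M_ge1 M_bound] := derive1n_bounded gamma_smooth 3 L_gt0 gamma_periodic.
have [delta [eps [delta_gt0 [eps_gt0 card_reps]]]] :=
  card0or2_local_representations (is_derive_derive1n gamma_smooth 0)
    (is_derive_derive1n gamma_smooth 1) (is_derive_derive1n gamma_smooth 2)
    M_ge1 (M_bound 1%N ^~ isT) (M_bound 2%N ^~ isT) (M_bound 3%N ^~ isT) normalized.
exists delta, eps; split=> //; split=> // t0 P P_near off_wall.
apply: card_reps => // t rep_t rep'_t; apply: off_wall; exists t.
by rewrite omega_antisym rep_t oppr0 omega_antisym rep'_t oppr0.
Qed.
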